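(* Let $0 < \varepsilon \leq 1/2$ and $d \geq 1$. Then for every positive integer $N \leq 2^{(1-H(\varepsilon))d}$ there exists an $\varepsilon$-sparse set $S \subseteq I_3^d$ with $|S| = N$.
   Context: $H(x) = -x\log_2 x - (1-x)\log_2(1-x)$ is the binary entropy function. $I_3^d = \{1,2,3\}^d$. For $\alpha,\beta \in I_3^d$, $\rho(\alpha,\beta)$ is the Hamming distance (number of coordinates where they differ). For $\alpha \in I_3^d$ let $T_\alpha = \{\beta \in I_3^d : \rho(\alpha,\beta) = d\}$. For $0<\varepsilon<1$, a set $S \subseteq I_3^d$ is $\varepsilon$-sparse if (1) $\rho(\alpha,\beta) \geq \varepsilon d$ for all distinct $\alpha,\beta \in S$, and (2) for every $\alpha \in S$ there is $\gamma_\alpha \in I_3^d$ with $T_{\gamma_\alpha} \cap S = \{\alpha\}$. *)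

From mathcomp Require Import all_boot.
From Stdlib Require Import Reals.
Set Implicit Arguments. Unset Strict Implicit. Unset Printing Implicit Defensive.

(* I_3^d : functions 'I_d -> 'I_3 (the symbols 1,2,3 are represented by 0,1,2). *)
Definition cube (d : nat) := {ffun 'I_d -> 'I_3}.

Definition hamming (d : nat) (a b : cube d) : nat := #|[set i : 'I_d | a i != b i]|.

Definition Tset (d : nat) (a : cube d) : {set cube d} := [set b | hamming a b == d].

Definition log2 (x : R) : R := (ln x / ln 2)%R.
Definition Hbin (x : R) : R := (- x * log2 x - (1 - x) * log2 (1 - x))%R.

Definition eps_sparse (eps : R) (d : nat) (S : {set cube d}) : Prop :=
  (forall a b, a \in S -> b \in S -> a <> b -> (eps * INR d <= INR (hamming a b))%R) /\
  (forall a, a \in S -> exists g : cube d, Tset g :&: S = [set a]).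

From mathcomp Require Import all_boot.
From Stdlib Require Import Reals Lra.
From mathcomp Require Import Rstruct.
Set Implicit Arguments. Unset Strict Implicit. Unset Printing Implicit Defensive.

(* A binary code of length d, minimum distance eps d and N words exists by the greedy
   (Gilbert-Varshamov) argument, because a Hamming ball of radius eps d has at most
   2^(H(eps) d) points: under the law that flips each bit of its centre independently
   with probability eps, every point of the ball has mass at least
   eps^(eps d) (1 - eps)^((1 - eps) d) = 2^(-H(eps) d).
   The code is then placed on the two outer symbols {1,3}^d of I_3^d.  The witness
   gamma for a codeword is its complement: the only point of {1,3}^d differing from
   gamma in every coordinate is the codeword itself. *)

Section HammingDistance.
Variables (T : eqType) (d : nat).
Implicit Types a b : {ffun 'I_d -> T}.

Definition hdist a b : nat := #|[set i | a i != b i]|.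

Lemma hdist_sym a b : hdist a b = hdist b a.
Proof. by apply: eq_card => i; rewrite !inE eq_sym. Qed.

Lemma hdist_xx a : hdist a a = 0%N.
Proof. by apply/eqP; rewrite cards_eq0; apply/eqP/setP => i; rewrite !inE eqxx. Qed.

Lemma hdist_le a b : (hdist a b <= d)%N.
Proof. by apply: leq_trans (max_card _) _; rewrite card_ord. Qed.

Lemma hdist_eq_dimP a b : reflect (forall i, a i != b i) (hdist a b == d).
Proof.
apply: (iffP eqP) => [dist_d i | neq_ab].
  have : [set i | a i != b i] = setT.
    by apply/eqP; rewrite eqEcard subsetT cardsT card_ord (eq_leq (esym dist_d)).
  by move/setP/(_ i); rewrite !inE.
by rewrite /hdist -[RHS](card_ord d) -cardsT; apply: eq_card => i; rewrite !inE neq_ab.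
Qed.

End HammingDistance.

Lemma hdist_map (T T' : eqType) (h : T -> T') d (a b : {ffun 'I_d -> T}) :
  injective h -> hdist [ffun i => h (a i)] [ffun i => h (b i)] = hdist a b.
Proof. by move=> h_inj; apply: eq_card => i; rewrite !inE !ffunE (inj_eq h_inj). Qed.

Lemma big_Rplus_const (I : finType) (A : {pred I}) (c : R) :
  \big[Rplus/0%R]_(i in A) c = (INR #|A| * c)%R.
Proof.
rewrite big_const; elim: #|A| => [|n IH]; first by rewrite /=; ring.
by rewrite iterS IH S_INR; ring.
Qed.

Lemma big_Rmult_const (I : finType) (A : {pred I}) (c : R) :
  \big[Rmult/1%R]_(i in A) c = (c ^ #|A|)%R.
Proof. by rewrite big_const; elim: #|A| => //= n ->. Qed.

Lemma big_Rle (I : finType) (P : pred I) (F G : I -> R) :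
  (forall i, P i -> F i <= G i)%R ->
  (\big[Rplus/0%R]_(i | P i) F i <= \big[Rplus/0%R]_(i | P i) G i)%R.
Proof.
move=> leFG; apply: (big_ind2 (fun u v => u <= v)%R) => [|*|]; [lra | lra | exact: leFG].
Qed.

Lemma big_Rle_subset (I : finType) (A : {pred I}) (F : I -> R) :
  (forall i, 0 <= F i)%R ->
  (\big[Rplus/0%R]_(i in A) F i <= \big[Rplus/0%R]_i F i)%R.
Proof.
move=> F_ge0; rewrite [X in (_ <= X)%R](bigID (mem A)) /=.
have : (0 <= \big[Rplus/0%R]_(i | i \notin A) F i)%R.
  by apply: (big_ind (fun u => 0 <= u)%R) => [|*|i _]; [lra | lra | exact: F_ge0].
lra.
Qed.

Definition bword d := {ffun 'I_d -> bool}.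

Lemma INR_card_bword d : INR #|bword d| = (2 ^ d)%R.
Proof.
rewrite card_ffun card_bool card_ord.
by elim: d => // d IH; rewrite expnS mult_INR IH /=; ring.
Qed.

Section FlipProbability.
Variables (e : R) (d : nat).
Hypotheses (e_ge0 : (0 <= e)%R) (e_le1 : (e <= 1)%R).
Implicit Types a x : bword d.

Definition flip_prob a x : R :=
  \big[Rmult/1%R]_i (if a i == x i then 1 - e else e)%R.

Lemma sum_flip_prob a : \big[Rplus/0%R]_x flip_prob a x = 1%R.
Proof.
rewrite -(bigA_distr_bigA (fun i b => if a i == b then 1 - e else e)%R).
by rewrite big1 // => i _; rewrite big_bool; case: (a i) => /=; ring.
Qed.

Lemma flip_probE a x :
  flip_prob a x = (e ^ hdist a x * (1 - e) ^ (d - hdist a x))%R.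
Proof.
set D := [set i | a i != x i].
rewrite /flip_prob (bigID (mem D)) /= (eq_bigr (fun=> e)) => [|i]; last first.
  by rewrite inE => /negPf->.
rewrite [X in (_ * X)%R](eq_big [in ~: D] (fun=> 1 - e)%R) => [|i|i].
- have cardCD : #|~: D| = (d - hdist a x)%N.
    by rewrite -[#|~: D|](addKn #|D|) cardsC card_ord.
  by rewrite !big_Rmult_const cardCD.
- by rewrite in_setC.
- by rewrite inE => /negPn->.
Qed.

Lemma flip_prob_ge0 a x : (0 <= flip_prob a x)%R.
Proof. by rewrite flip_probE; apply: Rmult_le_pos; apply: pow_le; lra. Qed.

End FlipProbability.

Lemma Hbin_ln2 e : (Hbin e * ln 2 = - (e * ln e + (1 - e) * ln (1 - e)))%R.
Proof.
have ln2_gt0 : (0 < ln 2)%R by rewrite -ln_1; apply: ln_increasing; lra.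
by rewrite /Hbin /log2; field; lra.
Qed.

Lemma entropy_le_pow e d h : (0 < e)%R -> (e <= 1/2)%R -> (h <= d)%N ->
  (INR h <= e * INR d)%R -> (Rpower 2 (- Hbin e * INR d) <= e ^ h * (1 - e) ^ (d - h))%R.
Proof.
move=> e_gt0 e_le_half h_le_d h_small.
have exp_le u v : (u <= v)%R -> (exp u <= exp v)%R.
  by case/Rle_lt_or_eq_dec => [/exp_increasing|->]; lra.
have ln_le u v : (0 < u)%R -> (u <= v)%R -> (ln u <= ln v)%R.
  by move=> u_gt0; case/Rle_lt_or_eq_dec => [/(ln_increasing _ _ u_gt0)|->]; lra.
have ln_e_le : (ln e <= ln (1 - e))%R by apply: ln_le; lra.
have ln_1e_le0 : (ln (1 - e) <= 0)%R by rewrite -ln_1; apply: ln_le; lra.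
rewrite -!Rpower_pow; try lra.
rewrite /Rpower -exp_plus; apply: exp_le.
have -> : (- Hbin e * INR d * ln 2 = INR d * (e * ln e + (1 - e) * ln (1 - e)))%R.
  by rewrite -[(e * ln e + _)%R]Ropp_involutive -Hbin_ln2; ring.
rewrite minus_INR; last exact/leP.
have d_ge_h : (INR h <= INR d)%R by apply/le_INR/leP.
nra.
Qed.

Definition close e d : rel (bword d) :=
  fun a b => Rltb (INR (hdist a b)) (e * INR d).

Lemma card_close_le e d (a : bword d) : (0 < e)%R -> (e <= 1/2)%R ->
  (INR #|[set x | close e a x]| <= Rpower 2 (Hbin e * INR d))%R.
Proof.
move=> e_gt0 e_le_half; set B := [set x | close e a x].
have mass : (INR #|B| * Rpower 2 (- Hbin e * INR d) <= 1)%R.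
  rewrite -big_Rplus_const -(sum_flip_prob e a).
  have e_le1 : (e <= 1)%R by lra.
  apply: Rle_trans (big_Rle_subset _ (flip_prob_ge0 (Rlt_le _ _ e_gt0) e_le1 a)).
  apply: big_Rle => x; rewrite inE => /RltbP close_ax; rewrite flip_probE.
  by apply: entropy_le_pow => //; [exact: hdist_le | lra].
have P_gt0 : (0 < Rpower 2 (Hbin e * INR d))%R by apply: exp_pos.
rewrite -Ropp_mult_distr_l Rpower_Ropp in mass.
apply: (Rmult_le_reg_r (/ Rpower 2 (Hbin e * INR d))); first exact: Rinv_0_lt_compat.
by rewrite Rinv_r; lra.
Qed.

Lemma card_bigcup_le (I T : finType) (C : {set I}) (B : I -> {set T}) :
  (#|\bigcup_(c in C) B c| <= \sum_(c in C) #|B c|)%N.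
Proof.
elim/big_rec2: _ => [|c s u _ IH]; first by rewrite cards0.
exact: leq_trans (leq_card_setU _ _).1 (leq_add _ IH).
Qed.

Lemma greedy_independent_set (T : finType) (r : rel T) (V n : nat) :
  reflexive r -> symmetric r -> (forall x, #|[set y | r x y]| <= V)%N ->
  (0 < V)%N -> (n * V <= #|T|)%N ->
  exists C : {set T}, #|C| = n /\ {in C &, forall a b, r a b -> a = b}.
Proof.
move=> r_refl r_sym ball_le V_gt0.
elim: n => [|n IH] nV_le.
  by exists set0; split=> [|a]; rewrite ?cards0 ?inE.
have [|C [card_C indep_C]] := IH; first by apply: leq_trans nV_le; rewrite mulSn leq_addl.
set bad := \bigcup_(c in C) [set y | r c y].
have bad_lt : (#|bad| < #|T|)%N.
  apply: leq_ltn_trans (card_bigcup_le _ _) _.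
  apply: leq_ltn_trans (_ : _ <= \sum_(c in C) V)%N _; first exact: leq_sum.
  by rewrite sum_nat_const card_C; apply: leq_trans nV_le; rewrite ltn_pmul2r.
have [x _ x_good] : exists2 x, x \in [set: T] & x \notin bad.
  by apply/subsetPn; apply: contraTN bad_lt => /subset_leq_card; rewrite cardsT leqNgt.
have far c : c \in C -> ~~ r c x.
  by move=> cC; apply: contra x_good => rcx; apply/bigcupP; exists c; rewrite ?inE.
have xNC : x \notin C by apply/negP => /far; rewrite r_refl.
exists (x |: C); split; first by rewrite cardsU1 xNC card_C.
move=> a b /setU1P[->|aC] /setU1P[->|bC] rab //.
- by move/negP: (far b bC); rewrite r_sym.
- by move/negP: (far a aC).
- exact: indep_C.
Qed.

Lemma gilbert_varshamov e d n : (0 < e)%R -> (e <= 1/2)%R -> (0 < d)%N ->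
  (INR n <= Rpower 2 ((1 - Hbin e) * INR d))%R ->
  exists C : {set bword d}, #|C| = n /\
    {in C &, forall a b, a <> b -> (e * INR d <= INR (hdist a b))%R}.
Proof.
move=> e_gt0 e_le_half d_gt0 n_le.
have close_refl : reflexive (@close e d).
  by move=> a; apply/RltbP; rewrite hdist_xx; apply: Rmult_lt_0_compat => //; exact/lt_0_INR/leP.
have close_sym : symmetric (@close e d) by move=> a b; rewrite /close hdist_sym.
set V := \max_(a : bword d) #|[set x | close e a x]|.
have [a0 V_eq] : exists a0 : bword d, V = #|[set x | close e a0 x]|.
  have bword_gt0 : (0 < #|bword d|)%N by apply/card_gt0P; exists [ffun=> true].
  by have [a0 max_eq] := eq_bigmax (fun a => #|[set x | close e a x]|) bword_gt0; exists a0.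
have V_gt0 : (0 < V)%N by rewrite V_eq; apply/card_gt0P; exists a0; rewrite inE close_refl.
have V_le : (INR V <= Rpower 2 (Hbin e * INR d))%R by rewrite V_eq; exact: card_close_le.
have [|C [card_C indep_C]] :=
  greedy_independent_set close_refl close_sym (fun a => leq_bigmax a) V_gt0 (n := n).
  apply/leP/INR_le; rewrite mult_INR INR_card_bword.
  have -> : (2 ^ d = Rpower 2 ((1 - Hbin e) * INR d) * Rpower 2 (Hbin e * INR d))%R.
    by rewrite -Rpower_plus -Rpower_pow; [congr Rpower; ring | lra].
  apply: Rmult_le_compat => //; exact: pos_INR.
exists C; split=> // a b aC bC a_ne_b; apply: Rnot_lt_le => close_ab.
by apply: a_ne_b; apply: indep_C => //; exact/RltbP.
Qed.

Definition bit3 (b : bool) : 'I_3 := if b then ord0 else ord_max.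

Lemma bit3_inj : injective bit3.
Proof. by case; case. Qed.

Definition cube_of {d} (f : bword d) : cube d := [ffun i => bit3 (f i)].

Lemma cube_of_inj d : injective (@cube_of d).
Proof.
move=> f g /ffunP fg; apply/ffunP => i.
by have := fg i; rewrite !ffunE => /bit3_inj.
Qed.

Lemma hamming_cube_of d (f g : bword d) : hamming (cube_of f) (cube_of g) = hdist f g.
Proof. exact: hdist_map bit3_inj. Qed.

Lemma eps_sparse_cube_of e d (C : {set bword d}) :
  {in C &, forall a b, a <> b -> (e * INR d <= INR (hdist a b))%R} ->
  eps_sparse e (cube_of @: C).
Proof.
move=> sep_C; split.
  move=> _ _ /imsetP[f fC ->] /imsetP[g gC ->] fg_ne; rewrite hamming_cube_of.
  by apply: sep_C => // fg; apply: fg_ne; rewrite fg.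
move=> _ /imsetP[f fC ->]; exists (cube_of [ffun i => ~~ f i]).
apply/setP => x; rewrite !inE; apply/andP/eqP => [[+ /imsetP[g gC x_eq]]|->].
  rewrite x_eq hamming_cube_of => /hdist_eq_dimP far_g.
  by congr cube_of; apply/ffunP => i; move: (far_g i); rewrite ffunE; case: (f i); case: (g i).
split; last exact: imset_f.
by rewrite hamming_cube_of; apply/hdist_eq_dimP => i; rewrite ffunE; case: (f i).
Qed.

Theorem proposition6 (eps : R) (d : nat) :
  (0 < eps)%R -> (eps <= 1/2)%R -> (1 <= d)%N ->
  forall N : nat, (0 < N)%N ->
    (INR N <= Rpower 2 ((1 - Hbin eps) * INR d))%R ->
    exists S : {set cube d}, eps_sparse eps S /\ #|S| = N.
Proof.
move=> eps_gt0 eps_le_half d_gt0 N _ N_le.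
have [C [card_C sep_C]] := gilbert_varshamov eps_gt0 eps_le_half d_gt0 N_le.
exists (cube_of @: C); split; first exact: eps_sparse_cube_of.
by rewrite card_imset ?card_C //; exact: cube_of_inj.
Qed.
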